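(* Let $X$ be a graph with real symmetric Hamiltonian $M$ whose entries are algebraic integers, with spectral decomposition $M=\sum_\lambda\lambda E_\lambda$. Suppose perfect state transfer occurs from vertex $a$ to vertex $\alpha\neq a$ at time $\tau$, and that a vertex $v\notin\{a,\alpha\}$ is periodic at time $\tau$. Let $s\in\mathbb{Q}\setminus\{0\}$. Then perfect state transfer occurs from $\mathbf e_a+s\mathbf e_v$ to $\mathbf e_\alpha+s\mathbf e_v$ at time $\tau$ if and only if there exist $\lambda\in\Phi^+_{\mathbf e_a,\mathbf e_\alpha}$ and $\lambda'\in\Phi_{\mathbf e_v}$ such that $\lambda\tau\equiv\lambda'\tau\pmod{2\pi}$.
   Context: $U(t)=e^{-\mathrm{i}tM}$. Perfect state transfer from $\mathbf u$ to $\boldsymbol\mu$ at time $\tau$: $U(\tau)\mathbf u=\eta\boldsymbol\mu$ with $|\eta|=1$; vertex $v$ is periodic at $\tau$ if $U(\tau)\mathbf e_v=\eta\mathbf e_v$ with $|\eta|=1$. $\Phi_{\mathbf v}=\{\lambda:E_\lambda\mathbf v\neq\mathbf 0\}$ is the eigenvalue support, and $\Phi^+_{\mathbf e_a,\mathbf e_\alpha}=\{\lambda: E_\lambda\mathbf e_a=E_\lambda\mathbf e_\alpha\neq\mathbf 0\}$. *)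

From HB Require Import structures.
From mathcomp Require Import all_boot all_order all_algebra.
From mathcomp Require Import all_classical all_reals all_analysis.
Set Implicit Arguments. Unset Strict Implicit. Unset Printing Implicit Defensive.
Import Order.TTheory GRing.Theory Num.Theory.
Import numFieldNormedType.Exports.
Local Open Scope ring_scope.

Section Defs.
Variable R : realType.
Variable n : nat.

Definition algebraic_integer (x : R) : Prop :=
  exists p : {poly int}, p \is monic /\ root (map_poly intr p) x.

(* Matrix exponential U(t) = exp(-i t M) = C(t) - i S(t), where
   C(t) = sum_k (-1)^k t^(2k)/(2k)! M^(2k)   and
   S(t) = sum_k (-1)^k t^(2k+1)/(2k+1)! M^(2k+1)
   (real and minus-imaginary parts of the exponential power series),
   defined entrywise as limits of the partial sums. *)
Definition cos_partial (M : 'M[R]_n) (t : R) (N : nat) : 'M[R]_n :=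
  \sum_(k < N) (((-1) ^+ k * t ^+ (2 * k)) / ((2 * k)`!)%:R) *: (M ^+ (2 * k)).
Definition sin_partial (M : 'M[R]_n) (t : R) (N : nat) : 'M[R]_n :=
  \sum_(k < N) (((-1) ^+ k * t ^+ (2 * k).+1) / ((2 * k).+1`!)%:R) *: (M ^+ (2 * k).+1).

Definition Ucos (M : 'M[R]_n) (t : R) : 'M[R]_n :=
  \matrix_(i, j) limn (fun N : nat => (cos_partial M t N i j : R^o)).
Definition Usin (M : 'M[R]_n) (t : R) : 'M[R]_n :=
  \matrix_(i, j) limn (fun N : nat => (sin_partial M t N i j : R^o)).

(* Perfect state transfer from real vector u to real vector mu at time tau:
   U(tau) u = eta mu with eta = c + i d, |eta| = 1.  Since U = Ucos - i Usin and
   u, mu are real, this is Ucos u = c mu and - Usin u = d mu. *)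
Definition pst (M : 'M[R]_n) (u mu : 'cV[R]_n) (tau : R) : Prop :=
  exists c d : R, c ^+ 2 + d ^+ 2 = 1 /\
    Ucos M tau *m u = c *: mu /\ - (Usin M tau *m u) = d *: mu.

Definition evec (a : 'I_n) : 'cV[R]_n := delta_mx a 0.

Definition periodic_vertex (M : 'M[R]_n) (v : 'I_n) (tau : R) : Prop :=
  pst M (evec v) (evec v) tau.

Definition spectral_decomposition (M : 'M[R]_n) (m : nat)
    (theta : 'I_m -> R) (E : 'I_m -> 'M[R]_n) : Prop :=
  injective theta /\
  (forall j, E j != 0) /\
  (forall j k, E j *m E k = if j == k then E j else 0) /\
  \sum_(j < m) E j = 1%:M /\
  M = \sum_(j < m) theta j *: E j.

End Defs.

From HB Require Import structures.
From mathcomp Require Import all_boot all_order all_algebra.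
From mathcomp Require Import all_classical all_reals all_analysis.
From mathcomp Require Import ring lra.
Set Implicit Arguments.
Unset Strict Implicit.
Import Order.TTheory GRing.Theory Num.Theory.
Import numFieldNormedType.Exports.
Local Open Scope ring_scope.
Local Open Scope classical_set_scope.

(* In the spectral basis U(tau) = cos(tau M) - i sin(tau M) acts on the range of
   E_j as the phase e^{-i theta_j tau}.  Projecting U(tau) e_a = eta e_alpha onto
   E_j shows that eta = e^{-i theta_j tau} whenever E_j e_a = E_j e_alpha <> 0, and
   that otherwise E_j e_alpha = - E_j e_a; as the E_j e_alpha add up to e_alpha, some
   j of the first kind exists.  Likewise the phase of the periodic vertex v is
   e^{-i theta_j' tau} for every j' in its eigenvalue support.  By linearity and the
   independence of e_alpha and e_v, transfer from e_a + s e_v to e_alpha + s e_v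
   happens iff these two phases coincide, i.e. iff theta_j tau = theta_j' tau
   modulo 2 pi. *)

Lemma limn_mx_comb (R : realType) (n m : nat) (A : 'I_m -> 'M[R]_n)
    (f : 'I_m -> nat -> R) (g : 'I_m -> R) :
  (forall j, f j @ \oo --> g j) ->
  \matrix_(i, l) limn (fun N => ((\sum_j f j N *: A j) i l : R^o)) =
  \sum_j g j *: A j.
Proof.
move=> f_cvg; apply/matrixP => i l; rewrite !mxE summxE.
under eq_bigr do rewrite mxE.
apply: cvg_lim => //.
have -> : (fun N => ((\sum_j f j N *: A j) i l : R^o)) =
    (fun N => \sum_j f j N * A j i l).
  by apply/funext => N; rewrite summxE; under eq_bigr do rewrite mxE.
apply: (cvg_big (op := +%R) (x0 := 0) (P := xpredT) add_continuous) => j _.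
exact: cvgMr_tmp.
Qed.

Lemma periodicz (U V : zmodType) (f : U -> V) (T : U) :
  periodic f T -> forall (k : int) a, f (a + T *~ k) = f a.
Proof.
move=> fT [] p a; first by rewrite -pmulrn periodicn.
by rewrite NegzE mulrNz -pmulrn -[in RHS](subrK (T *+ p.+1) a) periodicn.
Qed.

Section Trigonometry.
Variable R : realType.

Lemma cos_eq1 (x : R) : cos x = 1 -> exists k : int, x = k%:~R * (2 * pi).
Proof.
move=> cx1; have pi2_gt0 : 0 < 2 * pi :> R by rewrite mulr_gt0 ?pi_gt0.
pose k := Num.floor (x / (2 * pi)); exists k; apply/eqP; rewrite -subr_eq0; apply/eqP.
set w := x - _.
have cw1 : cos w = 1.
  by rewrite /w -mulNr -intrN mulrzl mulr_natl periodicz ?cx1 //; exact: cosD2pi.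
set q := x / (2 * pi).
have xE : x = q * (2 * pi) by rewrite divfK ?gt_eqF.
have k_le : k%:~R <= q := floor_le q.
have k_gt : q < k%:~R + 1 by have := real_floorD1_gt (num_real q); rewrite intrD.
have cos_eq1_0pi (y : R) : 0 <= y <= pi -> cos y = 1 -> y = 0.
  move=> y0pi cy1; apply: cos_inj; rewrite ?cos0 // !in_itv /= ?lexx ?pi_ge0 //.
have w_ge0 : 0 <= w by rewrite /w; nra.
have w_lt : w < 2 * pi by rewrite /w; nra.
have [w_le|w_gt] := lerP w pi; first by apply: cos_eq1_0pi => //; rewrite w_ge0.
have : 2 * pi - w = 0.
  apply: cos_eq1_0pi; first by apply/andP; split; lra.
  by rewrite mulr_natl addrC -[RHS]cw1 -[cos w]cosN; exact: cosD2pi.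
lra.
Qed.

Lemma cos_sin_eqP (x y : R) :
  cos x = cos y /\ sin x = sin y <-> exists k : int, x - y = k%:~R * (2 * pi).
Proof.
split=> [[cxy sxy]|[k xyk]].
  by apply: cos_eq1; rewrite cosB cxy sxy -!expr2 cos2Dsin2.
have -> : x = y + (pi *+ 2) *~ k by rewrite -mulrzl -mulr_natl -xyk subrKC.
by rewrite !periodicz //; [exact: sinD2pi | exact: cosD2pi].
Qed.

End Trigonometry.

Lemma scalemx_injl (R : idomainType) p q (A : 'M[R]_(p, q)) (a b : R) :
  A != 0 -> a *: A = b *: A -> a = b.
Proof.
move=> A0 /eqP; rewrite -subr_eq0 -scalerBl scalemx_eq0 (negbTE A0) orbF subr_eq0.
by move/eqP.
Qed.

Section Evec.
Variables (R : realType) (n : nat).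

Lemma evecE (a i : 'I_n) : evec R a i 0 = (i == a)%:R.
Proof. by rewrite mxE andbT. Qed.

Lemma evec_neq0 (a : 'I_n) : evec R a != 0.
Proof.
by apply/eqP => /matrixP/(_ a 0); rewrite evecE eqxx mxE; apply/eqP; exact: oner_neq0.
Qed.

Lemma evec_comb_inj (a b : 'I_n) (x y x' y' : R) : a != b ->
  x *: evec R a + y *: evec R b = x' *: evec R a + y' *: evec R b ->
  x = x' /\ y = y'.
Proof.
move=> ab e; have := congr1 (fun A : 'cV_n => A a 0) e.
have := congr1 (fun A : 'cV_n => A b 0) e.
rewrite /= !mxE !eqxx !andbT eq_sym (negbTE ab) !mulr0 !mulr1 addr0 add0r addr0 add0r.
by move=> -> ->.
Qed.

End Evec.

Section SpectralCalculus.
Context {R : realType} {n m : nat} {theta : 'I_m -> R} {E : 'I_m -> 'M[R]_n}.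
Hypothesis E_orth : forall j k, E j *m E k = if j == k then E j else 0.
Hypothesis E_sum : \sum_(j < m) E j = 1%:M.

Lemma mulmx_proj_comb (x : 'I_m -> R) j : E j *m \sum_k x k *: E k = x j *: E j.
Proof.
rewrite mulmx_sumr (bigD1 j) //= big1 ?addr0 => [|k /negbTE kj].
  by rewrite -scalemxAr E_orth eqxx.
by rewrite -scalemxAr E_orth eq_sym kj scaler0.
Qed.

Lemma sum_proj_mul p (u : 'M[R]_(n, p)) : \sum_j E j *m u = u.
Proof. by rewrite -mulmx_suml E_sum mul1mx. Qed.

Lemma proj_neq0_exists (u : 'cV[R]_n) : u != 0 -> exists j, E j *m u != 0.
Proof.
move=> u_neq0; have [j Eju|all0] := pickP (fun j => E j *m u != 0); first by exists j.
case/eqP: u_neq0; rewrite -(@sum_proj_mul _ u) big1 // => j _.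
by apply/eqP; move/negbFE: (all0 j).
Qed.

Context {M : 'M[R]_n}.
Hypothesis M_spectral : M = \sum_(j < m) theta j *: E j.

Lemma expr_spectral k : M ^+ k = \sum_j theta j ^+ k *: E j.
Proof.
elim: k => [|k IHk].
  by rewrite expr0 -idmxE -E_sum; apply: eq_bigr => j _; rewrite expr0 scale1r.
rewrite exprSr IHk -mulmxE mulmx_suml; apply: eq_bigr => j _.
by rewrite -scalemxAl M_spectral mulmx_proj_comb scalerA -exprSr.
Qed.

Lemma power_sum_spectral (e : nat -> nat) (b : nat -> R) t N :
  \sum_(k < N) (b k * t ^+ e k) *: M ^+ e k =
  \sum_j (\sum_(k < N) b k * (theta j * t) ^+ e k) *: E j.
Proof.
under eq_bigr do rewrite expr_spectral scaler_sumr.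
rewrite exchange_big; apply: eq_bigr => j _ /=; rewrite scaler_suml.
apply: eq_bigr => k _; rewrite scalerA exprMn; congr (_ *: _); ring.
Qed.

Lemma power_series_spectral (e : nat -> nat) (a : nat -> R -> R) (f : R -> R) t :
  (forall k x, a k x = a k 1 * x ^+ e k) ->
  (forall x, series (fun k => a k x) @ \oo --> f x) ->
  \matrix_(i, l) limn (fun N => ((\sum_(k < N) a k t *: M ^+ e k) i l : R^o)) =
  \sum_j f (theta j * t) *: E j.
Proof.
move=> aE a_cvg; rewrite -(@limn_mx_comb _ _ _ E _ _ (fun j => a_cvg (theta j * t))).
apply/matrixP => i l; rewrite !mxE; congr (lim (_ @ \oo)); apply/funext => N.
rewrite (eq_bigr (fun k : 'I_N => (a k 1 * t ^+ e k) *: M ^+ e k)) => [|k _];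
  last by rewrite aE.
rewrite (power_sum_spectral e (fun k => a k 1)); congr (fun_of_matrix _ i l).
apply: eq_bigr => j _.
by rewrite /series /= big_mkord; congr (_ *: _); apply: eq_bigr => k _; rewrite -aE.
Qed.

Lemma Ucos_spectral t : Ucos M t = \sum_j cos (theta j * t) *: E j.
Proof.
apply: (@power_series_spectral (fun k => 2 * k)%N
  (fun k x => (-1) ^+ k * x ^+ (2 * k) / (2 * k)`!%:R)) => [k x|x].
  by rewrite expr1n mulr1 mulrAC.
suff -> : (fun k => (-1) ^+ k * x ^+ (2 * k) / (2 * k)`!%:R) = cos_coeff' x
  by exact: cvg_cos_coeff'.
by apply/funext => k; rewrite /cos_coeff' -mul2n -exprnP.
Qed.

Lemma Usin_spectral t : Usin M t = \sum_j sin (theta j * t) *: E j.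
Proof.
apply: (@power_series_spectral (fun k => (2 * k).+1)%N
  (fun k x => (-1) ^+ k * x ^+ (2 * k).+1 / (2 * k).+1`!%:R)) => [k x|x].
  by rewrite expr1n mulr1 mulrAC.
suff -> : (fun k => (-1) ^+ k * x ^+ (2 * k).+1 / (2 * k).+1`!%:R) = sin_coeff' x
  by exact: cvg_sin_coeff'.
by apply/funext => k; rewrite /sin_coeff' -mul2n -exprnP.
Qed.

Lemma proj_Ucos j t : E j *m Ucos M t = cos (theta j * t) *: E j.
Proof. by rewrite Ucos_spectral mulmx_proj_comb. Qed.

Lemma proj_Usin j t : E j *m Usin M t = sin (theta j * t) *: E j.
Proof. by rewrite Usin_spectral mulmx_proj_comb. Qed.

Section Phase.
Context {tau : R} {u mu : 'cV[R]_n} {c d : R}.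
Hypothesis Ucos_u : Ucos M tau *m u = c *: mu.
Hypothesis Usin_u : - (Usin M tau *m u) = d *: mu.

Lemma proj_phase j :
  cos (theta j * tau) *: (E j *m u) = c *: (E j *m mu) /\
  - (sin (theta j * tau) *: (E j *m u)) = d *: (E j *m mu).
Proof.
split.
  by rewrite scalemxAl -proj_Ucos -mulmxA Ucos_u scalemxAr.
by rewrite scalemxAl -proj_Usin -mulmxA -mulmxN Usin_u scalemxAr.
Qed.

Lemma phase_of_proj j : E j *m u = E j *m mu -> E j *m u != 0 ->
  c = cos (theta j * tau) /\ d = - sin (theta j * tau).
Proof.
move=> uj_mu uj0; have [cos_j sin_j] := proj_phase j.
rewrite -uj_mu in cos_j sin_j; split; apply: (scalemx_injl uj0) => //.
by rewrite scaleNr.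
Qed.

Lemma proj_phase_sign j : c ^+ 2 + d ^+ 2 = 1 ->
  E j *m mu = E j *m u \/ E j *m mu = - (E j *m u).
Proof.
move=> cd1; have [cos_j sin_j] := proj_phase j.
set x := E j *m u in cos_j sin_j *; set y := E j *m mu in cos_j sin_j *.
set C := cos _ in cos_j; set S := sin _ in sin_j.
pose r := c * C - d * S.
have y_rx : r *: x = y.
  rewrite scalerBl -!scalerA cos_j -[S *: x]opprK sin_j scalerN opprK !scalerA.
  by rewrite -scalerDl -!expr2 cd1 scale1r.
have x_ry : r *: y = x.
  rewrite scalerBl [c * C]mulrC [d * S]mulrC -!scalerA -cos_j -sin_j scalerN opprK.
  by rewrite !scalerA -scalerDl -!expr2 cos2Dsin2 scale1r.
have [x0|x_neq0] := eqVneq x 0; first by left; rewrite -y_rx x0 scaler0.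
have : r ^+ 2 = 1 by apply: (scalemx_injl x_neq0); rewrite scale1r -scalerA y_rx.
by move/eqP; rewrite sqrf_eq1 => /orP[]/eqP r1; [left | right];
  rewrite -y_rx r1 ?scale1r ?scaleN1r.
Qed.

End Phase.

Lemma pst_proj_support (a alpha : 'I_n) tau : a != alpha ->
  pst M (evec R a) (evec R alpha) tau ->
  exists j, E j *m evec R a = E j *m evec R alpha /\ E j *m evec R a != 0.
Proof.
move=> a_alpha [c [d [cd1 [Ucos_a Usin_a]]]].
have [j /andP[/eqP Ej_eq Ej_neq0]|none] :=
  pickP (fun j => (E j *m evec R a == E j *m evec R alpha) && (E j *m evec R a != 0)).
  by exists j.
have anti j : E j *m evec R alpha = - (E j *m evec R a).
  have [Ej_eq|//] := proj_phase_sign Ucos_a Usin_a j cd1.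
  have := none j; rewrite /= Ej_eq eqxx /= => /negbFE/eqP Ej0.
  by rewrite Ej0 oppr0.
have alpha_a : alpha != a by rewrite eq_sym.
have := sum_proj_mul (evec R alpha); under eq_bigr do rewrite anti.
rewrite sumrN sum_proj_mul // => /matrixP/(_ alpha 0).
by rewrite mxE !evecE eqxx (negbTE alpha_a) oppr0 => /esym/eqP; rewrite oner_eq0.
Qed.


End SpectralCalculus.





Lemma pst_add_periodic_iff (R : realType) n (M : 'M[R]_n) tau (u : 'cV[R]_n) (alpha v : 'I_n)
    (s c d c' d' : R) :
  alpha != v -> s != 0 -> c ^+ 2 + d ^+ 2 = 1 ->
  Ucos M tau *m u = c *: evec R alpha -> - (Usin M tau *m u) = d *: evec R alpha ->
  Ucos M tau *m evec R v = c' *: evec R v -> - (Usin M tau *m evec R v) = d' *: evec R v ->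
  pst M (u + s *: evec R v) (evec R alpha + s *: evec R v) tau <-> c = c' /\ d = d'.
Proof.
move=> alpha_v s_neq0 cd1 Ucos_u Usin_u Ucos_v Usin_v.
have Ucos_sum : Ucos M tau *m (u + s *: evec R v) =
    c *: evec R alpha + (s * c') *: evec R v.
  by rewrite mulmxDr -scalemxAr Ucos_u Ucos_v scalerA.
have Usin_sum : - (Usin M tau *m (u + s *: evec R v)) =
    d *: evec R alpha + (s * d') *: evec R v.
  by rewrite mulmxDr opprD -scalemxAr -scalerN Usin_u Usin_v scalerA.
have scale_sum x : x *: (evec R alpha + s *: evec R v) =
    x *: evec R alpha + (s * x) *: evec R v.
  by rewrite scalerDr scalerA mulrC.
split=> [[c2 [d2 [_ []]]]|[cc' dd']]; last first.
  by exists c, d; rewrite Ucos_sum Usin_sum !scale_sum -cc' -dd'.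
rewrite Ucos_sum Usin_sum !scale_sum.
move=> /(evec_comb_inj alpha_v) [-> /(mulfI s_neq0) ->].
by move=> /(evec_comb_inj alpha_v) [-> /(mulfI s_neq0) ->].
Qed.

Theorem mainTheorem7 (R : realType) (n : nat) (M : 'M[R]_n)
  (m : nat) (theta : 'I_m -> R) (E : 'I_m -> 'M[R]_n)
  (a alpha v : 'I_n) (tau : R) (s : rat) :
  M^T = M ->
  (forall i j, algebraic_integer (M i j)) ->
  spectral_decomposition M theta E ->
  a != alpha ->
  pst M (evec R a) (evec R alpha) tau ->
  v != a -> v != alpha ->
  periodic_vertex M v tau ->
  s != 0 ->
  pst M (evec R a + ratr s *: evec R v) (evec R alpha + ratr s *: evec R v) tau <->
  (exists j j' : 'I_m,
     (E j *m evec R a = E j *m evec R alpha /\ E j *m evec R a != 0) /\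
     E j' *m evec R v != 0 /\
     exists k : int, theta j * tau - theta j' * tau = k%:~R * (2 * pi)).
Proof.
move=> _ _ [_ [_ [E_orth [E_sum M_spectral]]]] a_alpha pst_a _ v_alpha
  [c' [d' [_ [Ucos_v Usin_v]]]] s_neq0.
have [c [d [cd1 [Ucos_a Usin_a]]]] := pst_a.
have [j0 [Ej0_eq Ej0_neq0]] := pst_proj_support E_orth E_sum M_spectral a_alpha pst_a.
have [j0' Ej0'_neq0] := proj_neq0_exists E_sum (evec_neq0 R v).
have phase_a := phase_of_proj E_orth E_sum M_spectral Ucos_a Usin_a.
have phase_v := phase_of_proj E_orth E_sum M_spectral Ucos_v Usin_v.
have [c_cos d_sin] := phase_a j0 Ej0_eq Ej0_neq0.
have [c'_cos d'_sin] := phase_v j0' erefl Ej0'_neq0.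
have alpha_v : alpha != v by rewrite eq_sym.
rewrite (pst_add_periodic_iff alpha_v _ cd1 Ucos_a Usin_a Ucos_v Usin_v) ?fmorph_eq0 //.
split=> [[cc' dd']|[j [j' [[Ej_eq Ej_neq0] [Ej'_neq0 /cos_sin_eqP[cos_eq sin_eq]]]]]].
  exists j0, j0'; do !split=> //; apply/cos_sin_eqP; split; first by rewrite -c_cos -c'_cos.
  by apply: oppr_inj; rewrite -d_sin -d'_sin.
have [-> ->] := phase_a j Ej_eq Ej_neq0.
have [-> ->] := phase_v j' erefl Ej'_neq0.
by rewrite cos_eq sin_eq.
Qed.
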